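(* Let $k$ be a ring, let $B\subseteq A$ be $k$-modules and let $\mathcal A=\{A_i\}_{i\in I}$ be a decomposition of $A$ with $I$ finite. Then there exist a set $U$ and a map $u:I\to U$ such that $u_*\mathcal A$ restricts to $B$, and such that every map $f:I\to J$ (to any set $J$) for which $f_*\mathcal A$ restricts to $B$ factors uniquely as $f=g\circ u$ with $g:U\to J$.
   Context: A decomposition of a $k$-module $M$ is a family of submodules $\{M_i\}_{i\in I}$ such that the natural map $\bigoplus_{i}M_i\to M$ is an isomorphism. For $f:I\to J$, $f_*\{M_i\}_{i\in I}=\{\sum_{i\in f^{-1}(j)}M_i\}_{j\in J}$. A decomposition $\{A_i\}_{i\in I}$ of $A$ restricts to a submodule $B$ if $\{A_i\cap B\}_{i\in I}$ is a decomposition of $B$. *)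

From HB Require Import structures.
From Stdlib Require List.
From mathcomp Require Import all_boot all_order all_algebra.
Set Implicit Arguments. Unset Strict Implicit. Unset Printing Implicit Defensive.
Import GRing.Theory.
Local Open Scope ring_scope.

Section Decomp.
Variables (k : pzRingType) (M : lmodType k).

Definition is_submod (N : M -> Prop) : Prop :=
  [/\ N 0, (forall x y, N x -> N y -> N (x + y)) & (forall (a : k) x, N x -> N (a *: x))].

(* {N_j}_{j : J} is a decomposition of the submodule P: each N_j is a submodule
   of P, and the natural map (direct sum of the N_j) -> P is an isomorphism.
   Elements of the direct sum are finitely supported families; a support is
   given by a duplicate-free list s of indices. *)
Definition is_decomposition (J : Type) (P : M -> Prop) (N : J -> M -> Prop) : Prop :=
  [/\ is_submod P,
      (forall j, is_submod (N j)),
      (forall j m, N j m -> P m),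
      (forall m, P m -> exists (s : seq J) (x : J -> M),
          [/\ List.NoDup s, (forall j, N j (x j)) & m = \sum_(j <- s) x j])
    &
      (forall (s : seq J) (x : J -> M), List.NoDup s -> (forall j, N j (x j)) ->
          \sum_(j <- s) x j = 0 -> forall j, List.In j s -> x j = 0)].

Definition pushforward (I : finType) (J : Type) (f : I -> J) (N : I -> M -> Prop)
  : J -> M -> Prop :=
  fun j m => exists x : I -> M,
    [/\ (forall i, N i (x i)), (forall i, f i <> j -> x i = 0) & m = \sum_(i : I) x i].

Definition restricts (J : Type) (N : J -> M -> Prop) (B : M -> Prop) : Prop :=
  is_decomposition B (fun j m => N j m /\ B m).

End Decomp.

(* Call S ⊆ I compatible with B when the projection of A onto ⊕_{i∈S} A_i maps
   B into B.  The pushforward f_*A restricts to B exactly when every fibre of f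
   is compatible.  Compatible sets contain I and are closed under intersection
   and complement, so (I being finite) they form the Boolean algebra generated by
   their atoms, the least compatible sets containing a given index.  Taking u to
   map each index to its atom, the fibres of u are the atoms, hence compatible,
   and any f with compatible fibres is constant on atoms, so factors through u. *)

From HB Require Import structures.
From mathcomp Require Import all_boot all_order all_algebra.
From mathcomp Require Import boolp.
From Stdlib Require List.
Set Implicit Arguments. Unset Strict Implicit. Unset Printing Implicit Defensive.
Import GRing.Theory.
Local Open Scope ring_scope.

Lemma InP (T : eqType) (x : T) (s : seq T) : reflect (List.In x s) (x \in s).
Proof.
elim: s => [|a s IH] /=; first by constructor.
rewrite inE; apply: (iffP orP) => [[/eqP->|/IH]|[->|/IH]]; by [left | right].
Qed.

Lemma NoDupP (T : eqType) (s : seq T) : reflect (List.NoDup s) (uniq s).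
Proof.
elim: s => [|a s IH] /=; first by do 2 constructor.
apply: (iffP andP) => [[/InP a_s /IH]|/List.NoDup_cons_iff [/InP a_s /IH]];
  by [constructor | split].
Qed.

Lemma big_NoDup_delta (V : nmodType) (J : Type) (s : seq J) (j0 : J) (c : J -> V) :
  List.NoDup s ->
  \sum_(j <- s) (if `[< j0 = j >] then c j else 0) = if `[< List.In j0 s >] then c j0 else 0.
Proof.
elim=> [|a t a_t _ IH]; first by rewrite big_nil asboolF.
rewrite big_cons IH; case: (asboolP (j0 = a)) => [j0a|ne].
  by subst a; rewrite (asboolF a_t) addr0 asboolT //; left.
rewrite add0r; congr (if _ then _ else _).
by apply: asbool_equiv_eq; split => [|[/esym //|//]]; right.
Qed.

Definition fiber (I : finType) (J : Type) (f : I -> J) (j : J) : {set I} :=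
  [set i | `[< f i = j >]].

Section Partition.
Variables (I : finType) (J : Type) (f : I -> J).

Definition image_list : seq J :=
  List.nodup (fun a b => pselect (a = b)) (map f (enum I)).

Lemma NoDup_image_list : List.NoDup image_list.
Proof. exact: List.NoDup_nodup. Qed.

Lemma In_image_list i : List.In (f i) image_list.
Proof. by apply/List.nodup_In/List.in_map/InP; rewrite mem_enum. Qed.

Lemma sum_over_fibers (V : nmodType) (x : I -> V) :
  \sum_i x i = \sum_(j <- image_list) \sum_(i in fiber f j) x i.
Proof.
under [RHS]eq_bigr do rewrite big_mkcond /=.
rewrite exchange_big /=; apply: eq_bigr => i _.
under eq_bigr do rewrite inE.
by rewrite big_NoDup_delta ?(asboolT (In_image_list i)) //; exact: NoDup_image_list.
Qed.

End Partition.

Section Submodule.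
Variables (k : pzRingType) (M : lmodType k) (N : M -> Prop).
Hypothesis N_submod : is_submod N.

Lemma submod0 : N 0.
Proof. by case: N_submod. Qed.

Lemma submodD x y : N x -> N y -> N (x + y).
Proof. by case: N_submod => _ + _; apply. Qed.

Lemma submodZ a x : N x -> N (a *: x).
Proof. by case: N_submod => _ _; apply. Qed.

Lemma submodB x y : N x -> N y -> N (x - y).
Proof. by move=> Nx Ny; rewrite -scaleN1r; apply/submodD/submodZ. Qed.

Lemma submod_sum (J : Type) (s : seq J) (P : pred J) (F : J -> M) :
  (forall j, P j -> N (F j)) -> N (\sum_(j <- s | P j) F j).
Proof. exact: (big_ind N submod0 submodD). Qed.

End Submodule.

Lemma submodI (k : pzRingType) (M : lmodType k) (N N' : M -> Prop) :
  is_submod N -> is_submod N' -> is_submod (fun m => N m /\ N' m).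
Proof.
move=> N_submod N'_submod; split; first by split; exact: submod0.
- by move=> x y [? ?] [? ?]; split; apply: submodD.
- by move=> a x [? ?]; split; apply: submodZ.
Qed.

Section Decomposition.
Variables (k : pzRingType) (M : lmodType k) (I : finType) (A : I -> M -> Prop).
Hypothesis A_dec : is_decomposition (fun _ : M => True) A.

Lemma decomposition_submod i : is_submod (A i).
Proof. by case: A_dec. Qed.

Lemma exists_components m : exists x : I -> M, (forall i, A i (x i)) /\ m = \sum_i x i.
Proof.
case: A_dec => _ _ _ /(_ m Logic.I) [s [x [/NoDupP s_uniq Ax ->]]] _.
exists (fun i => if i \in s then x i else 0); split.
  by move=> i; case: ifP => _; [exact: Ax | exact: submod0 (decomposition_submod _)].
by rewrite -big_mkcond /= big_uniq.
Qed.

Lemma components_eq0 (x : I -> M) :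
  (forall i, A i (x i)) -> \sum_i x i = 0 -> forall i, x i = 0.
Proof.
case: A_dec => _ _ _ _ inj Ax sum0 i.
apply: (inj (enum I)) => //; last by apply/InP; rewrite mem_enum.
  exact/NoDupP/enum_uniq.
by rewrite big_enum.
Qed.

Lemma components_sub (x y : I -> M) : (forall i, A i (x i)) -> (forall i, A i (y i)) ->
  forall i, A i (x i - y i).
Proof. by move=> Ax Ay i; exact: (submodB (decomposition_submod i) (Ax i) (Ay i)). Qed.

Lemma pushforward_submod (J : Type) (f : I -> J) j : is_submod (pushforward f A j).
Proof.
split.
- exists (fun _ => 0); split => //; last by rewrite big1.
  by move=> i; exact: submod0 (decomposition_submod _).
- move=> _ _ [x [Ax fx ->]] [y [Ay fy ->]]; exists (fun i => x i + y i); split.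
  + by move=> i; exact: (submodD (decomposition_submod i) (Ax i) (Ay i)).
  + by move=> i fij; rewrite fx // fy // addr0.
  + by rewrite big_split.
- move=> a _ [x [Ax fx ->]]; exists (fun i => a *: x i); split.
  + by move=> i; exact: (submodZ (decomposition_submod i) a (Ax i)).
  + by move=> i fij; rewrite fx // scaler0.
  + by rewrite scaler_sumr.
Qed.

Lemma sum_fiber_pushforward (J : Type) (f : I -> J) (s : seq J) (y : J -> M) :
    (forall j, pushforward f A j (y j)) ->
  forall x, (forall i, A i (x i)) -> \sum_i x i = \sum_(j <- s) y j ->
  forall j0, \sum_(i in fiber f j0) x i = \sum_(j <- s) (if `[< j0 = j >] then y j else 0).
Proof.
move=> fAy; elim: s => [|a s IH] x Ax sum_x j0.
  by rewrite big_nil big1 // => i _; apply: components_eq0 => //; rewrite sum_x big_nil.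
have [z [Az fz y_a]] := fAy a.
have sum_xz : \sum_i (x i - z i) = \sum_(j <- s) y j.
  by rewrite sumrB sum_x big_cons -y_a addrC addKr.
under eq_bigr => i _ do rewrite -(subrK (z i) (x i)).
rewrite big_split /= (IH _ (components_sub Ax Az) sum_xz) big_cons addrC; congr (_ + _).
case: asboolP => [->|ne].
  rewrite y_a big_mkcond /=; apply: eq_bigr => i _.
  by rewrite inE; case: asboolP => // fij; rewrite fz.
by rewrite big1 // => i; rewrite inE => /asboolP fij; apply: fz => fia; apply: ne; rewrite -fij.
Qed.

Variable B : M -> Prop.
Hypothesis B_submod : is_submod B.

Definition compatible (S : {set I}) : Prop :=
  forall x : I -> M, (forall i, A i (x i)) -> B (\sum_i x i) -> B (\sum_(i in S) x i).

Lemma compatible_setT : compatible setT.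
Proof. by move=> x _ Bx; under eq_bigl do rewrite inE. Qed.

Lemma compatible_setI S T : compatible S -> compatible T -> compatible (S :&: T).
Proof.
move=> S_comp T_comp x Ax Bx.
pose xT i := if i \in T then x i else 0.
have AxT i : A i (xT i).
  by rewrite /xT; case: ifP => _ //; exact: submod0 (decomposition_submod _).
have := S_comp xT AxT; rewrite /xT -big_mkcond -big_mkcondr /=.
by under [X in _ -> B X]eq_bigl do rewrite inE; apply; exact: T_comp.
Qed.

Lemma compatible_setC S : compatible S -> compatible (~: S).
Proof.
move=> S_comp x Ax Bx.
have -> : \sum_(i in ~: S) x i = \sum_i x i - \sum_(i in S) x i.
  rewrite [\sum_i x i](bigID (mem S)) /= addrAC subrr add0r.
  by apply: eq_bigl => i; rewrite in_setC.
exact: (submodB B_submod Bx (S_comp x Ax Bx)).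
Qed.

Lemma restricts_pushforwardP (J : Type) (f : I -> J) :
  restricts (pushforward f A) B <-> forall j, compatible (fiber f j).
Proof.
split.
  case=> _ _ _ surj _ j0 x Ax Bx.
  have [s [y [_ fAy sum_x]]] := surj _ Bx.
  rewrite (sum_fiber_pushforward (fun j => proj1 (fAy j)) Ax sum_x).
  by apply: submod_sum => // j _; case: ifP => _; [exact: (proj2 (fAy j)) | exact: submod0].
move=> fiber_comp; split => //.
- by move=> j; apply: submodI => //; exact: pushforward_submod.
- by move=> j m [].
- move=> m Bm; have [x [Ax m_sum]] := exists_components m.
  exists (image_list f), (fun j => \sum_(i in fiber f j) x i).
  split; [exact: NoDup_image_list | move=> j; split | by rewrite m_sum -sum_over_fibers].
    exists (fun i => if i \in fiber f j then x i else 0); split; last by rewrite -big_mkcond.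
      by move=> i; case: ifP => _ //; exact: submod0 (decomposition_submod _).
    by move=> i fij; rewrite inE asboolF.
  by apply: fiber_comp => //; rewrite -m_sum.
- move=> s y s_NoDup fAy sum0 j0 j0_s.
  have A0 i : A i 0 by exact: submod0 (decomposition_submod _).
  have := sum_fiber_pushforward (s := s) (fun j => proj1 (fAy j)) A0.
  rewrite big1 // sum0 => /(_ erefl j0).
  by rewrite big1 // big_NoDup_delta // (asboolT j0_s).
Qed.

End Decomposition.

Section Atoms.
Variables (I : finType) (P : {set I} -> Prop).
Hypotheses (P_setT : P setT)
  (P_setI : forall S T, P S -> P T -> P (S :&: T))
  (P_setC : forall S, P S -> P (~: S)).

Definition atom (i : I) : {set I} := \bigcap_(S | `[< P S >] && (i \in S)) S.

Lemma P_atom i : P (atom i).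
Proof. by apply: (big_ind P) => // S /andP[/asboolP]. Qed.

Lemma mem_atom i : i \in atom i.
Proof. by apply/bigcapP => S /andP[]. Qed.

Lemma atom_min S i : P S -> i \in S -> atom i \subset S.
Proof. by move=> PS iS; apply: bigcap_inf; rewrite iS andbT; exact/asboolP. Qed.

Lemma eq_atom i j : (atom j == atom i) = (j \in atom i).
Proof.
apply/eqP/idP => [<-|j_i]; first exact: mem_atom.
apply/eqP; rewrite eqEsubset (atom_min (P_atom i) j_i) /=.
apply: atom_min (P_atom j) _; apply: contraT => i_notin_j.
have : atom i \subset atom i :&: ~: atom j.
  by apply: atom_min; [exact: P_setI (P_atom i) (P_setC (P_atom j)) | rewrite !inE mem_atom].
by move/subsetP/(_ j j_i); rewrite !inE mem_atom andbF.
Qed.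

Lemma atom_classE i : [set j | atom j == atom i] = atom i.
Proof. by apply/setP => j; rewrite inE eq_atom. Qed.

Lemma fun_eq_atom (J : Type) (f : I -> J) :
  (forall j, P (fiber f j)) -> forall i j, atom i = atom j -> f i = f j.
Proof.
move=> fiberP i j atom_ij.
have f_j : j \in fiber f (f j) by rewrite inE; exact/asboolP.
have := subsetP (atom_min (fiberP (f j)) f_j) i.
by rewrite inE -atom_ij mem_atom => /(_ isT) /asboolP.
Qed.

End Atoms.

Section ImageFactorization.
Variables (I : finType) (T : eqType) (a : I -> T).

Definition image_type : Type := {y : T | y \in codom a}.

Definition to_image (i : I) : image_type := exist _ (a i) (codom_f a i).

Definition from_image (y : image_type) : I := iinv (valP y).

Lemma from_imageK : cancel from_image to_image.
Proof. by move=> y; apply: val_inj; exact: f_iinv. Qed.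

Lemma fiber_to_image i : fiber to_image (to_image i) = [set j | a j == a i].
Proof.
apply/setP => j; rewrite !inE; apply/asboolP/eqP => [/(congr1 val) //|aji].
by apply: val_inj.
Qed.

Lemma factor_through_image (J : Type) (f : I -> J) :
    (forall i j, a i = a j -> f i = f j) ->
  exists g : image_type -> J, (forall i, f i = g (to_image i)) /\
    (forall g' : image_type -> J, (forall i, f i = g' (to_image i)) -> forall y, g' y = g y).
Proof.
move=> f_const; exists (f \o from_image); split => [i|g' fg' y] /=.
  by apply: f_const; rewrite f_iinv.
by rewrite -{1}(from_imageK y) -fg'.
Qed.

End ImageFactorization.

Theorem mainTheorem9 (k : pzRingType) (M : lmodType k) (B : M -> Prop)
    (I : finType) (A : I -> M -> Prop) :
  is_submod B ->
  is_decomposition (fun _ : M => True) A ->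
  exists (U : Type) (u : I -> U),
    restricts (pushforward u A) B /\
    forall (J : Type) (f : I -> J),
      restricts (pushforward f A) B ->
      exists g : U -> J,
        (forall i, f i = g (u i)) /\
        (forall g' : U -> J, (forall i, f i = g' (u i)) -> forall y, g' y = g y).
Proof.
move=> B_submod A_dec; pose comp := compatible A B.
have [comp_T comp_I comp_C] : [/\ comp setT,
    forall S T, comp S -> comp T -> comp (S :&: T) & forall S, comp S -> comp (~: S)].
  by split; [exact: compatible_setT | exact: compatible_setI | exact: compatible_setC].
exists (image_type (atom comp)), (to_image (atom comp)); split.
  apply/restricts_pushforwardP => // y; rewrite -(from_imageK y) fiber_to_image.
  by rewrite (atom_classE comp_T comp_I comp_C); exact: P_atom.
move=> J f /(restricts_pushforwardP A_dec B_submod) fiber_comp.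
exact/factor_through_image/fun_eq_atom.
Qed.
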